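(* Under the standing setting and the standing parameter choice described in the context, let $\{\hat\omega^k\}=\{(x^k,\xi^k,\hat x^k,\xi^{k-1})\}$ be generated by iBPDCA and assume it is bounded. For each $k$ define $\upsilon^{k+1}=(\upsilon^{k+1}_x,\upsilon^{k+1}_\xi,\upsilon^{k+1}_{\hat x},\upsilon^{k+1}_\zeta)$ by $\upsilon^{k+1}_{x}=\nabla h^-(\hat{x}^k)-\nabla h^-(x^{k+1})+2\delta(x^{k+1}-\hat{x}^{k+1})-\tau(\nabla\psi(x^{k+1})-\nabla\psi(\hat{x}^k))$, $\upsilon^{k+1}_{\xi}=\hat{x}^k-x^k+\frac{1}{\alpha_{k+1}}(x^{k+1}-\hat{x}^{k+1})+(2\eta-\beta)(\xi^{k+1}-\xi^k)$, $\upsilon^{k+1}_{\hat{x}}=-2\delta(x^{k+1}-\hat{x}^{k+1})$, $\upsilon^{k+1}_{\zeta}=2\eta(\xi^{k}-\xi^{k+1})$. Then $\upsilon^{k+1}\in\partial\hat\Theta(\hat\omega^{k+1})$, and there exists $\theta>0$ such that for all $k$ $$\operatorname{dist}(0,\partial \hat{\Theta}(\hat{\omega}^{k+1}))\leq \theta\big(\|x^{k}-\hat{x}^{k}\|+\|x^{k+1}-\hat{x}^{k+1}\|+\|\xi^{k+1}-\xi^k\| \big).$$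
   Context: Problem: minimize $\Phi(x)=f(x)-g(x)+h(x)$ over $x\in\mathbb{R}^n$, where: $f:\mathbb{R}^n\to(-\infty,\infty]$ is proper, lower semicontinuous and convex; $g:\mathbb{R}^n\to\mathbb{R}$ is convex and continuous; $h=h^+-h^-$ where $h^+,h^-:\mathbb{R}^n\to\mathbb{R}$ are differentiable with Lipschitz continuous gradients of moduli $L_h^+$ and $L_h^-$ respectively (not necessarily convex); and $\inf_x\Phi(x)>-\infty$. $g^*$ is the convex conjugate of $g$. Kernel: $\psi:\mathbb{R}^n\to\mathbb{R}$ is differentiable, $\rho$-strongly convex ($\rho>0$), with $\nabla\psi$ Lipschitz continuous with modulus $L_\psi$; $\mathscr{B}_\psi(x,y)=\psi(x)-\psi(y)-\langle\nabla\psi(y),x-y\rangle$. Algorithm (iBPDCA): choose $x^0,\xi^0\in\mathbb{R}^n$, set $x^{-1}=x^0$, $\{\alpha_k\}\subseteq[\alpha_{\min},1]$ with $0<\alpha_{\min}<1$, $\beta>1/2$, $\tau>0$. For $k=0,1,\dots$: $\hat x^k=x^k+\alpha_k(x^k-x^{k-1})$; $\xi^{k+1}=\arg\min_{\xi}\{g^*(\xi)-\langle\hat x^k,\xi\rangle+\frac{\beta}{2}\|\xi-\xi^k\|^2\}$; $x^{k+1}\in\arg\min_{x}\{f(x)+h^+(x)-\langle x-\hat x^k,\ \xi^{k+1}+\nabla h^-(\hat x^k)\rangle+\tau\mathscr{B}_\psi(x,\hat x^k)\}$ (assumed to exist). $\Theta(x,\xi)=f(x)+g^*(\xi)-\langle\xi,x\rangle+h^+(x)-h^-(x)$;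 merit function $\hat\Theta(x,\xi,\hat x,\zeta)=\Theta(x,\xi)+\delta\|x-\hat x\|^2+\eta\|\xi-\zeta\|^2$ on $\mathbb{R}^n\times\mathbb{R}^n\times\mathbb{R}^n\times\mathbb{R}^n$; $\hat\omega^k=(x^k,\xi^k,\hat x^k,\xi^{k-1})$. $\partial$ denotes the limiting (Mordukhovich) subdifferential, and $\operatorname{dist}(0,S)=\inf_{s\in S}\|s\|$. Standing parameter choice: $\epsilon\in(0,1)$, $\beta>1/2$, and $\delta,\tau,\eta$ satisfy $\delta=\frac{\tau L_\psi-L_h^-}{2[(1-\epsilon)+(1+\epsilon)\alpha_{\min}^2]}$, $\tau=\frac{2(L_h^-)^2+L_h^-+1+2(1+\epsilon)\delta}{2\rho}$, $\eta=\frac{2\beta-1}{2(1+\epsilon)}$, with $L_h^-<\tau L_\psi$. *)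

From HB Require Import structures.
From mathcomp Require Import all_boot all_order all_algebra.
From mathcomp Require Import all_classical all_reals all_analysis.

Set Implicit Arguments.
Unset Strict Implicit.
Unset Printing Implicit Defensive.

Import Order.TTheory GRing.Theory Num.Theory.
Import numFieldNormedType.Exports.
Local Open Scope ring_scope.
Local Open Scope classical_set_scope.

Section Defs.
Variable R : realType.

Definition vdot n (x y : 'rV[R]_n) : R := \sum_(i < n) x ord0 i * y ord0 i.
Definition vnorm n (x : 'rV[R]_n) : R := Num.sqrt (vdot x x).

Definition quad n := ('rV[R]_n * 'rV[R]_n * 'rV[R]_n * 'rV[R]_n)%type.
Definition ip4 n (w1 w2 : quad n) : R :=
  vdot w1.1.1.1 w2.1.1.1 + vdot w1.1.1.2 w2.1.1.2
  + vdot w1.1.2 w2.1.2 + vdot w1.2 w2.2.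

Definition ipnorm (V : zmodType) (ip : V -> V -> R) (v : V) : R :=
  Num.sqrt (ip v v).

(* Frechet (regular) subdifferential: F x finite and
   liminf_{y -> x, y <> x} (F y - F x - <v, y - x>) / ||y - x|| >= 0,
   written out in epsilon-delta form. *)
Definition frechet_subdiff (V : zmodType) (ip : V -> V -> R)
    (F : V -> \bar R) (x v : V) : Prop :=
  F x \is a fin_num /\
  forall e : R, 0 < e -> exists2 d : R, 0 < d &
    forall y : V, ipnorm ip (y - x) < d ->
      (F x + (ip v (y - x) - e * ipnorm ip (y - x))%:E <= F y)%E.

Definition limiting_subdiff (V : zmodType) (ip : V -> V -> R)
    (F : V -> \bar R) (x v : V) : Prop :=
  F x \is a fin_num /\
  exists (xs vs : nat -> V),
    [/\ (fun k => ipnorm ip (xs k - x)) @ \oo --> (0 : R),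
        (fun k => F (xs k)) @ \oo --> F x,
        (forall k, frechet_subdiff ip F (xs k) (vs k)) &
        (fun k => ipnorm ip (vs k - v)) @ \oo --> (0 : R)].

(* dist(0, S) = inf_{s in S} ||s|| (= +oo if S is empty) *)
Definition dist0 (V : zmodType) (ip : V -> V -> R) (S : set V) : \bar R :=
  ereal_inf [set (ipnorm ip v)%:E | v in S].

Definition has_gradient n (F : 'rV[R]_n -> R) (G : 'rV[R]_n -> 'rV[R]_n) :=
  forall x (e : R), 0 < e -> exists2 d : R, 0 < d &
    forall y, vnorm (y - x) < d ->
      `|F y - F x - vdot (G x) (y - x)| <= e * vnorm (y - x).

Definition lipschitz_with n (G : 'rV[R]_n -> 'rV[R]_n) (L : R) :=
  forall x y, vnorm (G x - G y) <= L * vnorm (x - y).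

Definition convex_fun n (F : 'rV[R]_n -> R) :=
  forall x y (l : R), 0 < l < 1 ->
    F (l *: x + (1 - l) *: y) <= l * F x + (1 - l) * F y.

Definition strongly_convex n (F : 'rV[R]_n -> R) (rho : R) :=
  forall x y (l : R), 0 < l < 1 ->
    F (l *: x + (1 - l) *: y) <=
      l * F x + (1 - l) * F y - rho / 2 * l * (1 - l) * vnorm (x - y) ^+ 2.

Definition continuous_fun n (F : 'rV[R]_n -> R) :=
  forall x (e : R), 0 < e -> exists2 d : R, 0 < d &
    forall y, vnorm (y - x) < d -> `|F y - F x| < e.

Definition proper_fun n (F : 'rV[R]_n -> \bar R) :=
  (forall x, F x != -oo%E) /\ exists x, F x != +oo%E.

Definition lsc_fun n (F : 'rV[R]_n -> \bar R) :=
  forall x (t : R), (t%:E < F x)%E -> exists2 d : R, 0 < d &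
    forall y, vnorm (y - x) < d -> (t%:E < F y)%E.

Definition econvex_fun n (F : 'rV[R]_n -> \bar R) :=
  forall x y : 'rV[R]_n, forall l : R, 0 < l < 1 ->
    (F (l *: x + (1 - l) *: y)%R <= l%:E * F x + (1 - l)%:E * F y)%E.

Definition conjugate n (g : 'rV[R]_n -> R) (xi : 'rV[R]_n) : \bar R :=
  ereal_sup (range (fun x => (vdot xi x - g x)%:E)).

Definition bregman n (psi : 'rV[R]_n -> R) (dpsi : 'rV[R]_n -> 'rV[R]_n)
    (x y : 'rV[R]_n) : R :=
  psi x - psi y - vdot (dpsi y) (x - y).

Definition Phi n (f : 'rV[R]_n -> \bar R) (g hp hm : 'rV[R]_n -> R) x : \bar R :=
  (f x + (- g x + (hp x - hm x))%:E)%E.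

Definition Theta n (f : 'rV[R]_n -> \bar R) (g hp hm : 'rV[R]_n -> R)
    (x xi : 'rV[R]_n) : \bar R :=
  (f x + conjugate g xi - (vdot xi x)%:E + (hp x)%:E - (hm x)%:E)%E.

Definition Thetahat n (f : 'rV[R]_n -> \bar R) (g hp hm : 'rV[R]_n -> R)
    (delta eta : R) (w : quad n) : \bar R :=
  (Theta f g hp hm w.1.1.1 w.1.1.2
   + (delta * vnorm (w.1.1.1 - w.1.2) ^+ 2
      + eta * vnorm (w.1.1.2 - w.2) ^+ 2)%:E)%E.

(* extrapolation, with the convention x^{-1} = x^0 (note 0.-1 = 0) *)
Definition xhat n (x : nat -> 'rV[R]_n) (alpha : nat -> R) (k : nat) : 'rV[R]_n :=
  x k + alpha k *: (x k - x k.-1).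

Definition xi_obj n (g : 'rV[R]_n -> R) (beta : R) (xh xik xi : 'rV[R]_n) : \bar R :=
  (conjugate g xi - (vdot xh xi)%:E + (beta / 2 * vnorm (xi - xik) ^+ 2)%:E)%E.

Definition x_obj n (f : 'rV[R]_n -> \bar R) (hp : 'rV[R]_n -> R)
    (dhm : 'rV[R]_n -> 'rV[R]_n) (psi : 'rV[R]_n -> R)
    (dpsi : 'rV[R]_n -> 'rV[R]_n) (tau : R) (xh xi1 x : 'rV[R]_n) : \bar R :=
  (f x + (hp x - vdot (x - xh) (xi1 + dhm xh)
          + tau * bregman psi dpsi x xh)%:E)%E.

Definition iBPDCA n (f : 'rV[R]_n -> \bar R) (g hp : 'rV[R]_n -> R)
    (dhm : 'rV[R]_n -> 'rV[R]_n) (psi : 'rV[R]_n -> R)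
    (dpsi : 'rV[R]_n -> 'rV[R]_n) (alpha : nat -> R) (beta tau : R)
    (x xi : nat -> 'rV[R]_n) : Prop :=
  forall k,
    (forall z, (xi_obj g beta (xhat x alpha k) (xi k) (xi k.+1)
                <= xi_obj g beta (xhat x alpha k) (xi k) z)%E) /\
    (forall z, (x_obj f hp dhm psi dpsi tau (xhat x alpha k) (xi k.+1) (x k.+1)
                <= x_obj f hp dhm psi dpsi tau (xhat x alpha k) (xi k.+1) z)%E).

Definition omegahat n (x xi : nat -> 'rV[R]_n) (alpha : nat -> R) (k : nat) : quad n :=
  (x k, xi k, xhat x alpha k, xi k.-1).

Definition upsilon n (x xi : nat -> 'rV[R]_n) (alpha : nat -> R)
    (dhm dpsi : 'rV[R]_n -> 'rV[R]_n) (beta tau delta eta : R) (k : nat) : quad n :=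
  let xh := xhat x alpha in
  (dhm (xh k) - dhm (x k.+1) + (2 * delta) *: (x k.+1 - xh k.+1)
     - tau *: (dpsi (x k.+1) - dpsi (xh k)),
   xh k - x k + (alpha k.+1)^-1 *: (x k.+1 - xh k.+1)
     + (2 * eta - beta) *: (xi k.+1 - xi k),
   - ((2 * delta) *: (x k.+1 - xh k.+1)),
   (2 * eta) *: (xi k - xi k.+1)).

End Defs.

(* Split Thetahat into f(x) + g^*(xi) and a smooth part S.  The optimality
   conditions of the two iBPDCA subproblems give subgradients of the convex
   functions f at x^{k+1} and g^* at xi^{k+1} (finiteness of g^* there uses that
   a convex continuous g has an affine minorant).  Adding the gradient of S gives
   a Frechet, hence limiting, subgradient of Thetahat at omega^{k+1}, and this
   subgradient is upsilon^{k+1}.  Its norm is bounded through the Lipschitz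
   constants of grad h^- and grad psi, using
   x^k - x^{k+1} = (x^{k+1} - xhat^{k+1}) / alpha_{k+1} and alpha_{k+1} >= alpha_min. *)

From HB Require Import structures.
From mathcomp Require Import all_boot all_order all_algebra.
From mathcomp Require Import all_classical all_reals all_analysis.
From mathcomp Require Import ring lra.
Import Order.TTheory GRing.Theory Num.Theory.
Import numFieldNormedType.Exports.
Local Open Scope ring_scope.
Local Open Scope classical_set_scope.
Set Implicit Arguments.
Unset Strict Implicit.
Unset Printing Implicit Defensive.

Section Euclidean.
Variables (R : realType) (n : nat).
Implicit Types (u v w : 'rV[R]_n) (a : R).

Lemma vdotC u v : vdot u v = vdot v u.
Proof. by apply: eq_bigr => i _; rewrite mulrC. Qed.

Lemma vdotDl u v w : vdot (u + v) w = vdot u w + vdot v w.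
Proof. by rewrite /vdot -big_split; apply: eq_bigr => i _; rewrite !mxE mulrDl. Qed.

Lemma vdotZl a u w : vdot (a *: u) w = a * vdot u w.
Proof. by rewrite /vdot mulr_sumr; apply: eq_bigr => i _; rewrite !mxE mulrA. Qed.

Lemma vdotNl u w : vdot (- u) w = - vdot u w.
Proof. by rewrite -scaleN1r vdotZl mulN1r. Qed.

Lemma vdotBl u v w : vdot (u - v) w = vdot u w - vdot v w.
Proof. by rewrite vdotDl vdotNl. Qed.

Lemma vdotDr u v w : vdot w (u + v) = vdot w u + vdot w v.
Proof. by rewrite vdotC vdotDl !(vdotC w). Qed.

Lemma vdotZr a u w : vdot w (a *: u) = a * vdot w u.
Proof. by rewrite vdotC vdotZl vdotC. Qed.

Lemma vdotNr u w : vdot w (- u) = - vdot w u.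
Proof. by rewrite vdotC vdotNl vdotC. Qed.

Lemma vdotBr u v w : vdot w (u - v) = vdot w u - vdot w v.
Proof. by rewrite vdotDr vdotNr. Qed.

Lemma vdot0l w : vdot 0 w = 0.
Proof. by rewrite /vdot big1 // => i _; rewrite mxE mul0r. Qed.

Lemma vdot_ge0 u : 0 <= vdot u u.
Proof. by apply: sumr_ge0 => i _; rewrite -expr2 sqr_ge0. Qed.

Lemma vnorm_ge0 u : 0 <= vnorm u.
Proof. exact: sqrtr_ge0. Qed.

Lemma vnorm0 : vnorm (0 : 'rV[R]_n) = 0.
Proof. by rewrite /vnorm vdot0l sqrtr0. Qed.

Lemma vnorm_sqr u : vnorm u ^+ 2 = vdot u u.
Proof. by rewrite /vnorm sqr_sqrtr // vdot_ge0. Qed.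

Lemma vnormD_sqr u v : vnorm (u + v) ^+ 2 = vnorm u ^+ 2 + 2 * vdot u v + vnorm v ^+ 2.
Proof. by rewrite !vnorm_sqr vdotDl !vdotDr (vdotC v u); ring. Qed.

Lemma vnormB_sqr u v : vnorm (u - v) ^+ 2 = vnorm u ^+ 2 - 2 * vdot u v + vnorm v ^+ 2.
Proof. by rewrite !vnorm_sqr vdotBl !vdotBr (vdotC v u); ring. Qed.

Lemma vdot_sqr_le u v : vdot u v ^+ 2 <= vdot u u * vdot v v.
Proof.
set a := vdot u u; set b := vdot v v; set c := vdot u v.
have disc t : 0 <= a - 2 * t * c + t ^+ 2 * b.
  have := vdot_ge0 (u - t *: v); rewrite -vnorm_sqr vnormB_sqr !vnorm_sqr.
  by rewrite vdotZr vdotZl vdotZr -/a -/b -/c; congr (_ <= _); ring.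
have [a0 b0] := (vdot_ge0 u, vdot_ge0 v); rewrite -/a -/b in a0 b0.
have [b00|bn0] := eqVneq b 0.
  have [c00|cn0] := eqVneq c 0; first by rewrite c00 b00; lra.
  have := disc ((a + 1) / (2 * c)); rewrite b00 mulr0 addr0.
  have -> : 2 * ((a + 1) / (2 * c)) * c = a + 1 by field; rewrite cn0.
  lra.
have bp : 0 < b by rewrite lt_def bn0.
have := disc (c / b).
have -> : a - 2 * (c / b) * c + (c / b) ^+ 2 * b = (a * b - c ^+ 2) / b by field.
by rewrite pmulr_lge0 ?invr_gt0 // subr_ge0.
Qed.

Lemma vdot_le u v : `|vdot u v| <= vnorm u * vnorm v.
Proof.
rewrite -(ger0_norm (mulr_ge0 (vnorm_ge0 u) (vnorm_ge0 v))).
by rewrite -ler_sqr ?nnegrE // !real_normK ?num_real // exprMn !vnorm_sqr vdot_sqr_le.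
Qed.

Lemma vnormD u v : vnorm (u + v) <= vnorm u + vnorm v.
Proof.
rewrite -ler_sqr ?nnegrE ?addr_ge0 ?vnorm_ge0 // vnormD_sqr sqrrD.
by have := vdot_le u v; have := ler_norm (vdot u v); lra.
Qed.

Lemma vnormZ a u : vnorm (a *: u) = `|a| * vnorm u.
Proof. by rewrite /vnorm vdotZl vdotZr mulrA -expr2 sqrtrM ?sqr_ge0 // sqrtr_sqr. Qed.

Lemma vnormN u : vnorm (- u) = vnorm u.
Proof. by rewrite -scaleN1r vnormZ normrN normr1 mul1r. Qed.

Lemma vnormB u v : vnorm (u - v) <= vnorm u + vnorm v.
Proof. by rewrite -(vnormN v) vnormD. Qed.

Lemma vdistC u v : vnorm (u - v) = vnorm (v - u).
Proof. by rewrite -vnormN opprB. Qed.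

(* [`|v|] is the sup norm of the normed-module structure on matrices; it is
   equivalent to the Euclidean norm [vnorm v]. *)
Lemma rV_normE v : `|v| = \big[Num.max/0]_ij `|v ij.1 ij.2|.
Proof. by rewrite -mx_normrE. Qed.

Lemma mx_norm_le_vnorm v : `|v| <= vnorm v.
Proof.
rewrite rV_normE; apply: bigmax_le => [|[i j] _ /=]; first exact: vnorm_ge0.
rewrite (ord1 i) -(sqrtr_sqr (v ord0 j)) ler_sqrt ?vdot_ge0 //.
by rewrite /vdot (bigD1 j) //= -expr2 lerDl sumr_ge0 // => k _; rewrite -expr2 sqr_ge0.
Qed.

Lemma vnorm_le_mx_norm v : vnorm v <= (n%:R + 1) * `|v|.
Proof.
have v0 : 0 <= `|v| := normr_ge0 v.
have n1 : 0 <= n%:R + 1 :> R by rewrite addr_ge0.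
rewrite -(ger0_norm (mulr_ge0 n1 v0)) -sqrtr_sqr ler_sqrt ?sqr_ge0 //.
apply: (@le_trans _ _ (\sum_(i < n) `|v| ^+ 2)).
  apply: ler_sum => i _; rewrite -expr2 -real_normK ?num_real // lerXn2r ?nnegrE //.
  rewrite rV_normE.
  exact: (le_bigmax 0 (fun ij : 'I_1 * 'I_n => `|v ij.1 ij.2|) (ord0, i)).
rewrite sumr_const card_ord exprMn -[in leLHS]mulr_natl ler_wpM2r ?sqr_ge0 //.
have : 0 <= n%:R :> R by []; nra.
Qed.

Lemma continuous_funP (F : 'rV[R]_n -> R) : continuous_fun F -> continuous F.
Proof.
move=> Fc x A /nbhs_ballP [e e0 heA].
have [d d0 Hd] := Fc x e e0.
have n1 : 0 < n%:R + 1 :> R by rewrite ltr_wpDl.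
apply/nbhs_ballP; exists (d / (n%:R + 1)); first exact: divr_gt0.
move=> y; rewrite -ball_normE /= => xy; apply: heA.
rewrite -ball_normE /= distrC; apply: Hd; apply: le_lt_trans (vnorm_le_mx_norm _) _.
by rewrite -ltr_pdivlMl // mulrC -normrN opprB.
Qed.

Lemma vnorm_lipschitz u v : `|vnorm u - vnorm v| <= vnorm (u - v).
Proof.
rewrite ler_norml; have := vnormD (u - v) v; have := vnormD (v - u) u.
by rewrite !subrK vdistC; lra.
Qed.

Lemma continuous_vnorm : continuous (@vnorm R n).
Proof.
apply: continuous_funP => x e e0; exists e => // y yx.
exact: le_lt_trans (vnorm_lipschitz _ _) yx.
Qed.

Lemma continuous_coercive_min (phi : 'rV[R]_n -> R) (r : R) :
  continuous phi -> (forall y, r <= vnorm y -> phi 0 < phi y) ->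
  exists c, forall y, phi c <= phi y.
Proof.
move=> phic far; pose A := closed_ball (0 : 'rV[R]_n) r.
have r0 : 0 < r.
  by rewrite ltNge; apply/negP => r0; have := far 0; rewrite vnorm0 ltxx => /(_ r0).
have AE y : A y <-> `|y| <= r.
  by rewrite /A closed_ballE /closed_ball_ //= sub0r normrN.
have A0 : A 0 by apply/AE; rewrite normr0 ltW.
have cA : compact A.
  apply: bounded_closed_compact; last exact: closed_ball_closed.
  exists r; split; first by rewrite num_real.
  by move=> M rM y /AE Ay; apply: le_trans Ay (ltW rM).
have [c _ cmin] := EVT_min_rV (ex_intro _ 0 A0) cA (continuous_subspaceT phic).
exists c => y; have [yr|ry] := leP `|y| r; first by apply: cmin; rewrite inE; apply/AE.
apply: le_trans (cmin 0 _) (ltW (far y _)); first by rewrite inE.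
exact: le_trans (ltW ry) (mx_norm_le_vnorm y).
Qed.

End Euclidean.

Definition vdotE := (vdotDl, vdotBl, vdotNl, vdotZl, vdotDr, vdotBr, vdotNr, vdotZr).

Section Supergradient.
Variables (R : realType) (n : nat).
Implicit Types (s : 'rV[R]_n -> R) (x G : 'rV[R]_n).

Definition frechet_supgrad s x G := forall e : R, 0 < e -> exists2 d : R, 0 < d &
  forall y, vnorm (y - x) < d -> s y - s x - vdot G (y - x) <= e * vnorm (y - x).

Lemma has_gradient_supgrad s ds x : has_gradient s ds -> frechet_supgrad s x (ds x).
Proof.
move=> sg e /(sg x)[d d0 Hd]; exists d => // y /Hd; exact: le_trans (ler_norm _).
Qed.

Lemma frechet_supgradD s1 s2 x G1 G2 : frechet_supgrad s1 x G1 ->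
  frechet_supgrad s2 x G2 -> frechet_supgrad (s1 \+ s2) x (G1 + G2).
Proof.
move=> s1g s2g e e0; have e2 : 0 < e / 2 by lra.
have [d1 d10 H1] := s1g _ e2; have [d2 d20 H2] := s2g _ e2.
exists (Num.min d1 d2) => [|y]; first by rewrite lt_min d10 d20.
rewrite lt_min => /andP[/H1 r1 /H2 r2]; rewrite vdotDl /=; lra.
Qed.

Lemma frechet_supgradZ (c : R) s x G : 0 <= c ->
  frechet_supgrad s x G -> frechet_supgrad (fun y => c * s y) x (c *: G).
Proof.
move=> c0 sg e e0; have c1 : 0 < c + 1 by lra.
have [d d0 Hd] := sg _ (divr_gt0 e0 c1); exists d => // y /Hd r.
have D0 := vnorm_ge0 (y - x).
rewrite vdotZl -!mulrBr (le_trans (ler_wpM2l c0 r)) // mulrA ler_wpM2r //.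
by rewrite mulrA ler_pdivrMr //; nra.
Qed.

Lemma frechet_supgrad_quadratic s x G (c : R) :
  (forall y, s y - s x - vdot G (y - x) = c * vnorm (y - x) ^+ 2) ->
  frechet_supgrad s x G.
Proof.
move=> sE e e0; have c1 : 0 < `|c| + 1 by rewrite ltr_wpDl.
exists (e / (`|c| + 1)) => [|y]; first exact: divr_gt0.
rewrite sE ltr_pdivlMr // => yx.
have D0 := vnorm_ge0 (y - x); set D := vnorm (y - x) in yx D0 *.
have : c * D ^+ 2 <= `|c| * D * D by rewrite -mulrA -expr2 ler_wpM2r ?sqr_ge0 ?ler_norm.
have := normr_ge0 c; nra.
Qed.

Lemma frechet_supgrad_eq s1 s2 x G1 G2 :
  (forall y, s1 y - s1 x - vdot G1 (y - x) = s2 y - s2 x - vdot G2 (y - x)) ->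
  frechet_supgrad s2 x G2 -> frechet_supgrad s1 x G1.
Proof. by move=> sE sg e /sg[d d0 Hd]; exists d => // y; rewrite sE; apply: Hd. Qed.

Lemma small_step (D m : R) : 0 <= D -> 0 < m -> exists t : R, [/\ 0 < t, t < 1 & t * D < m].
Proof.
move=> D0 m0; have D1 : 0 < D + 1 by lra.
have t0 : 0 < m / (2 * (D + 1)) by rewrite divr_gt0 ?pmulr_rgt0.
exists (Num.min (1 / 2) (m / (2 * (D + 1)))); split.
- by rewrite lt_min t0 andbT; lra.
- by rewrite gt_min; apply/orP; left; lra.
- have tm : Num.min (1 / 2) (m / (2 * (D + 1))) <= m / (2 * (D + 1)) by rewrite ge_min lexx orbT.
  apply: (le_lt_trans (ler_wpM2r D0 tm)).
  rewrite mulrAC ltr_pdivrMr ?pmulr_rgt0 //; nra.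
Qed.

Local Open Scope ereal_scope.

(* On the segment [z t = t y + (1 - t) x], convexity bounds [F (z t)] from
   above and local minimality plus the supergradient bound it from below;
   divide by [t] and let [t] go to [0]. *)
Lemma local_min_subgrad (F : 'rV[R]_n -> \bar R) s x G (r : R) :
  econvex_fun F -> F x \is a fin_num -> frechet_supgrad s x G -> (0 < r)%R ->
  (forall z, (vnorm (z - x) < r)%R -> F x + (s x)%:E <= F z + (s z)%:E) ->
  forall y, F x + (- vdot G (y - x))%:E <= F y.
Proof.
move=> Fc Ffin sg r0 Fmin y.
set D := vnorm (y - x); have D0 : (0 <= D)%R by apply: vnorm_ge0.
pose z t := (t *: y + (1 - t) *: x)%R.
have zx t : (0 < t)%R -> (z t - x = t *: (y - x))%R.
  by move=> _; rewrite /z scalerBr scalerBl scale1r addrCA addrAC subrr add0r.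
have zD t : (0 < t)%R -> vnorm (z t - x) = (t * D)%R.
  by move=> t0; rewrite zx // vnormZ gtr0_norm.
move: Fmin; rewrite -(fineK Ffin); set fx := fine (F x) => Fmin.
have Fz t : (0 < t)%R -> (t < 1)%R -> (t * D < r)%R ->
    (fx + s x - s (z t))%:E <= F (z t) /\ F (z t) <= t%:E * F y + (1 - t)%:E * fx%:E.
  move=> t0 t1 tr; split; last by rewrite /fx fineK //; apply: Fc; rewrite t0 t1.
  have := Fmin (z t); rewrite zD // => /(_ tr).
  case: (F (z t)) => [fz| |] h; rewrite ?leey //.
  by move: h; rewrite -!EFinD !lee_fin; lra.
case Fy: (F y) => [fy| |]; rewrite ?leey //.
- rewrite -EFinD lee_fin; apply/ler_addgt0Pr => e e0.
  have eD0 : (0 < e / (D + 1))%R by rewrite divr_gt0 //; lra.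
  have [d d0 Hd] := sg _ eD0.
  have dr : (0 < Num.min d r)%R by rewrite lt_min d0 r0.
  have [t [t0 t1 tD]] := small_step D0 dr.
  move: tD; rewrite lt_min => /andP[td tr].
  have := Fz t t0 t1 tr; rewrite Fy -!EFinM -EFinD.
  case: (F (z t)) => [fz| |] []; rewrite ?lee_fin ?leye_eq ?leey //.
  move=> fzl fzu.
  have := Hd (z t); rewrite zD // => /(_ td); rewrite zx // vdotZr.
  have eD : (e / (D + 1) * D <= e)%R.
    by rewrite mulrAC ler_pdivrMr ?ler_pM2l; lra.
  have : (t * (e / (D + 1) * D) <= t * e)%R by rewrite ler_pM2l.
  move=> te sz.
  suff : (t * fx <= t * (fy + vdot G (y - x) + e))%R by rewrite ler_pM2l //; lra.
  nra.
- have [t [t0 t1 tr]] := small_step D0 r0.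
  have [] := Fz t t0 t1 tr; rewrite Fy mulrNy gtr0_sg // mul1e addNye.
  by move=> /le_trans h /h; rewrite leeNy_eq.
Qed.

End Supergradient.

Section Conjugate.
Variables (R : realType) (n : nat) (g : 'rV[R]_n -> R).
Local Open Scope ereal_scope.

Lemma conjugate_ge xi z : (vdot xi z - g z)%:E <= conjugate g xi.
Proof. by apply: ereal_sup_ubound; exists z. Qed.

Lemma conjugate_le xi (C : R) :
  (forall z, (vdot xi z - g z <= C)%R) -> conjugate g xi <= C%:E.
Proof. by move=> H; apply: ge_ereal_sup => _ [z _ <-]; rewrite lee_fin. Qed.

Lemma conjugate_neqNy xi : conjugate g xi != -oo.
Proof. by apply/negP => /eqP h; have := conjugate_ge xi 0; rewrite h leeNy_eq. Qed.

Lemma conjugate_convex : econvex_fun (conjugate g).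
Proof.
move=> x y l /andP[l0 l1]; apply: ge_ereal_sup => _ [z _ <-].
have -> : (vdot (l *: x + (1 - l) *: y) z - g z =
           l * (vdot x z - g z) + (1 - l) * (vdot y z - g z))%R.
  by rewrite vdotDl !vdotZl; ring.
rewrite EFinD !EFinM.
by apply: leeD; apply: lee_wpmul2l;
  rewrite ?lee_fin ?subr_ge0 ?(ltW l0) ?(ltW l1) ?conjugate_ge.
Qed.

End Conjugate.

Lemma convex_fun_EFin (R : realType) n (g : 'rV[R]_n -> R) :
  convex_fun g -> econvex_fun (fun x => (g x)%:E).
Proof. by move=> gc x y l hl; rewrite -!EFinM -EFinD lee_fin; apply: gc. Qed.

Section ConvexContinuous.
Variables (R : realType) (n : nat) (g : 'rV[R]_n -> R).
Hypotheses (g_convex : convex_fun g) (g_cont : continuous_fun g).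

Lemma convex_continuous_linear_lb :
  exists2 b : R, 0 <= b & forall y, g 0 - 1 - b * vnorm y <= g y.
Proof.
have [d d0 Hd] := g_cont 0 ltr01.
have b0 : 0 <= 2 / d by rewrite divr_ge0 // ltW.
exists (2 / d) => // y; have Y0 := vnorm_ge0 y.
have [yd|dy] := ltP (vnorm y) d.
  have := Hd y; rewrite subr0 => /(_ yd); rewrite ltr_norml => /andP[h _].
  by have := mulr_ge0 b0 Y0; lra.
have Yp : 0 < vnorm y by lra.
set l := d / 2 / vnorm y.
have l0 : 0 < l by rewrite !divr_gt0.
have l1 : l < 1 by rewrite /l ltr_pdivrMr // mul1r; lra.
have := g_convex y 0 (l:=l); rewrite l0 l1 scaler0 addr0 => /(_ isT) gl.
have := Hd (l *: y); rewrite subr0 vnormZ gtr0_norm // /l mulfVK ?gt_eqF //.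
move=> /(_ ltac:(lra)); rewrite ltr_norml => /andP[h _].
rewrite -(ler_pM2l l0) !mulrBr mulrA (_ : l * (2 / d) * vnorm y = 1); last first.
  by rewrite /l; field; rewrite !gt_eqF.
nra.
Qed.

Lemma convex_continuous_coercive :
  exists r : R, forall y, r <= vnorm y -> g 0 < g y + vnorm y ^+ 2 / 2.
Proof.
have [b b0 gb] := convex_continuous_linear_lb.
exists (2 * b + 2) => y yr; have := gb y; nra.
Qed.

(* A minimiser [c] of [g + |.|^2 / 2] exists by coercivity; its optimality
   condition makes [- c] a subgradient of [g] at [c], so [g^*] is finite at [- c]. *)
Lemma convex_continuous_conjugate_fin : exists z, conjugate g z \is a fin_num.
Proof.
have [r far] := convex_continuous_coercive.
pose phi y := g y + vnorm y ^+ 2 / 2.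
have phic : continuous phi.
  have sqr_half : continuous (fun t : R => t ^+ 2 / 2).
    by move=> t; apply: cvgMr_tmp; apply: exprn_continuous.
  move=> y; apply: (@continuousD _ _ _ g (fun y => vnorm y ^+ 2 / 2)).
    exact: continuous_funP.
  exact: continuous_comp (@continuous_vnorm R n y) (@sqr_half (vnorm y)).
have [c cmin] : exists c, forall y, phi c <= phi y.
  apply: (continuous_coercive_min (r := r) phic) => y /far.
  by rewrite /phi vnorm0 expr0n /= mul0r addr0.
have sg : frechet_supgrad (fun y => vnorm y ^+ 2 / 2) c c.
  apply: (frechet_supgrad_quadratic (c := 1 / 2)) => y.
  by rewrite vnormB_sqr vdotBr !vnorm_sqr (vdotC c y); field.
have gsub y : ((g c)%:E + (- vdot c (y - c))%:E <= (g y)%:E)%E.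
  apply: (local_min_subgrad (convex_fun_EFin g_convex) _ sg ltr01) => // z _.
  by rewrite -!EFinD lee_fin; apply: cmin.
exists (- c); rewrite fin_numE conjugate_neqNy /=.
have : (conjugate g (- c) <= (- vdot c c - g c)%:E)%E.
  apply: conjugate_le => y; have := gsub y.
  by rewrite -EFinD lee_fin vdotNl vdotBr; lra.
by apply: contraTN => /eqP ->; rewrite leye_eq.
Qed.

End ConvexContinuous.

Section SubproblemOptimality.
Variables (R : realType) (n : nat).
Implicit Types (x y z : 'rV[R]_n).
Local Open Scope ereal_scope.

Lemma min_fin_num (T : Type) (F : T -> \bar R) (s : T -> R) (x z : T) :
  F x != -oo -> F z \is a fin_num -> F x + (s x)%:E <= F z + (s z)%:E ->
  F x \is a fin_num.
Proof.
move=> FxNy /fineK <-; rewrite fin_numE FxNy /=.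
by apply: contraTN => /eqP ->; rewrite -EFinD.
Qed.

Lemma x_step_subgrad (f : 'rV[R]_n -> \bar R) (hp psi : 'rV[R]_n -> R)
    (dhp dhm dpsi : 'rV[R]_n -> 'rV[R]_n) (tau : R) xh xi1 x1 :
  proper_fun f -> econvex_fun f -> has_gradient hp dhp -> has_gradient psi dpsi ->
  (0 <= tau)%R ->
  (forall z, x_obj f hp dhm psi dpsi tau xh xi1 x1 <= x_obj f hp dhm psi dpsi tau xh xi1 z) ->
  f x1 \is a fin_num /\ forall y,
    f x1 + (vdot (xi1 + dhm xh - dhp x1 - tau *: (dpsi x1 - dpsi xh)) (y - x1))%:E <= f y.
Proof.
move=> [fNy [z0 fz0]] f_convex hp_grad psi_grad tau0 xmin.
pose s z := (hp z - vdot (z - xh) (xi1 + dhm xh) + tau * bregman psi dpsi z xh)%R.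
have f1 : f x1 \is a fin_num.
  by apply: (min_fin_num (s := s) (z := z0)) (xmin z0); rewrite // fin_numE fNy.
split => // y.
set a := (xi1 + dhm xh - dhp x1 - tau *: (dpsi x1 - dpsi xh))%R.
rewrite -[a]opprK vdotNl.
apply: (local_min_subgrad (s := s) f_convex f1 _ ltr01) => [|z _]; last exact: xmin.
apply: (frechet_supgrad_eq (s2 := fun y => hp y + tau * psi y)%R); last first.
  exact: frechet_supgradD (has_gradient_supgrad _ hp_grad)
                          (frechet_supgradZ tau0 (has_gradient_supgrad _ psi_grad)).
move=> z; rewrite /s /a /bregman /= (vdotC (z - xh)) (vdotC (x1 - xh)) !vdotE.
by ring.
Qed.

Lemma xi_step_subgrad (g : 'rV[R]_n -> R) (beta : R) xh xik xi1 :
  convex_fun g -> continuous_fun g ->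
  (forall z, xi_obj g beta xh xik xi1 <= xi_obj g beta xh xik z) ->
  conjugate g xi1 \is a fin_num /\ forall y,
    conjugate g xi1 + (vdot (xh - beta *: (xi1 - xik)) (y - xi1))%:E <= conjugate g y.
Proof.
move=> g_convex g_cont ximin.
pose s z := (- vdot xh z + beta / 2 * vnorm (z - xik) ^+ 2)%R.
have objE z : xi_obj g beta xh xik z = conjugate g z + (s z)%:E.
  by rewrite /xi_obj /s EFinD EFinN addeA.
have [z0 cz0] := convex_continuous_conjugate_fin g_convex g_cont.
have c1 : conjugate g xi1 \is a fin_num.
  apply: (min_fin_num (s := s) (z := z0)); rewrite ?conjugate_neqNy // -!objE.
  exact: ximin.
split => // y.
rewrite -[X in vdot X]opprK vdotNl.
apply: (local_min_subgrad (s := s) (conjugate_convex g) c1 _ ltr01) => [|z _]; last first.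
  by rewrite -!objE; apply: ximin.
apply: (frechet_supgrad_quadratic (c := beta / 2)) => z.
rewrite /s (_ : z - xik = (xi1 - xik) + (z - xi1))%R; last first.
  by rewrite [RHS]addrC addrA subrK.
by rewrite vnormD_sqr !vdotE; field.
Qed.

End SubproblemOptimality.

Section Subdifferentials.
Variables (R : realType) (V : zmodType) (ip : V -> V -> R).

Lemma frechet_subdiff_add_smooth (F : V -> \bar R) (S : V -> R) (w u v : V) :
  (forall z, ip (u + v) z = ip u z + ip v z) ->
  F w \is a fin_num -> (forall w', (F w + (ip u (w' - w))%:E <= F w')%E) ->
  (forall e : R, 0 < e -> exists2 d : R, 0 < d & forall w', ipnorm ip (w' - w) < d ->
     - (e * ipnorm ip (w' - w)) <= S w' - S w - ip v (w' - w)) ->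
  frechet_subdiff ip (fun w => F w + (S w)%:E)%E w (u + v).
Proof.
move=> ipD Ffin Fsub Sdiff; split; first by rewrite fin_numD Ffin.
move=> e /Sdiff[d d0 Hd]; exists d => // w' /Hd.
have := Fsub w'; rewrite -(fineK Ffin) ipD.
set N := ipnorm ip _; set a := ip u _; set b := ip v _.
case: (F w') => [Fw'| |] //; last by rewrite addye ?leey.
by rewrite -!EFinD !lee_fin; lra.
Qed.

Lemma frechet_subdiff_limiting (F : V -> \bar R) w v :
  ip 0 0 = 0 -> frechet_subdiff ip F w v -> limiting_subdiff ip F w v.
Proof.
move=> ip00 Fv; split; first by case: Fv.
exists (fun=> w), (fun=> v); rewrite /ipnorm !subrr ip00 sqrtr0.
by split => //; exact: cvg_cst.
Qed.

Lemma dist0_le_ipnorm (S : set V) v : S v -> (dist0 ip S <= (ipnorm ip v)%:E)%E.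
Proof. by move=> Sv; apply: ereal_inf_lbound; exists v. Qed.

End Subdifferentials.

Section ProductSpace.
Variables (R : realType) (n : nat).
Implicit Types (w : quad R n).

Lemma ip4Dl w1 w2 w : ip4 (w1 + w2) w = ip4 w1 w + ip4 w2 w.
Proof. by rewrite /ip4 /= !vdotDl; ring. Qed.

Lemma ip40 : ip4 (0 : quad R n) 0 = 0.
Proof. by rewrite /ip4 /= !vdot0l !addr0. Qed.

Lemma vnorm_le_ipnorm4 w :
  [/\ vnorm w.1.1.1 <= ipnorm (@ip4 R n) w, vnorm w.1.1.2 <= ipnorm (@ip4 R n) w,
      vnorm w.1.2 <= ipnorm (@ip4 R n) w & vnorm w.2 <= ipnorm (@ip4 R n) w].
Proof.
have := (vdot_ge0 w.1.1.1, vdot_ge0 w.1.1.2, vdot_ge0 w.1.2, vdot_ge0 w.2).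
by case=> [[[a0 b0] c0] d0]; split; rewrite /vnorm /ipnorm /ip4 ler_sqrt; lra.
Qed.

Lemma ipnorm4_le w :
  ipnorm (@ip4 R n) w <= vnorm w.1.1.1 + vnorm w.1.1.2 + vnorm w.1.2 + vnorm w.2.
Proof.
have := (vnorm_ge0 w.1.1.1, vnorm_ge0 w.1.1.2, vnorm_ge0 w.1.2, vnorm_ge0 w.2).
case=> [[[a0 b0] c0] d0]; set s := _ + _ + _ + _.
have s0 : 0 <= s by rewrite /s; lra.
rewrite -(ger0_norm s0) -sqrtr_sqr ler_sqrt ?sqr_ge0 //.
by rewrite /ip4 -!vnorm_sqr /s; nra.
Qed.

End ProductSpace.

Lemma scaled_vdist_sqr_ge (R : realType) n (c N : R) (u v : 'rV[R]_n) :
  vnorm u <= N -> vnorm v <= N -> - (4 * `|c| * N ^+ 2) <= c * vnorm (u - v) ^+ 2.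
Proof.
move=> uN vN; have := vnormB u v; have := vnorm_ge0 (u - v); have := vnorm_ge0 u.
set q := vnorm (u - v) => q0 u0 quv.
have q2 : q ^+ 2 <= 4 * N ^+ 2 by nra.
have := normr_ge0 c; have : - `|c| <= c by rewrite lerNl -normrN ler_norm.
nra.
Qed.

Section ThetahatSmooth.
Variables (R : realType) (n : nat) (hp hm : 'rV[R]_n -> R) (dhp dhm : 'rV[R]_n -> 'rV[R]_n).
Variables (delta eta : R).
Implicit Types (w : quad R n).

Definition Thetahat_smooth w : R :=
  - vdot w.1.1.2 w.1.1.1 + hp w.1.1.1 - hm w.1.1.1
  + (delta * vnorm (w.1.1.1 - w.1.2) ^+ 2 + eta * vnorm (w.1.1.2 - w.2) ^+ 2).

Definition Thetahat_smooth_grad w : quad R n :=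
  (- w.1.1.2 + dhp w.1.1.1 - dhm w.1.1.1 + (2 * delta) *: (w.1.1.1 - w.1.2),
   - w.1.1.1 + (2 * eta) *: (w.1.1.2 - w.2),
   - ((2 * delta) *: (w.1.1.1 - w.1.2)),
   (2 * eta) *: (w.2 - w.1.1.2)).

Lemma ThetahatE (f : 'rV[R]_n -> \bar R) (g : 'rV[R]_n -> R) w :
  Thetahat f g hp hm delta eta w =
  (f w.1.1.1 + conjugate g w.1.1.2 + (Thetahat_smooth w)%:E)%E.
Proof.
rewrite /Thetahat /Theta /Thetahat_smooth !EFinD EFinN -!addeA.
by congr (_ + (_ + _))%E; rewrite !addeA.
Qed.

Lemma Thetahat_smooth_expansion w dw :
  Thetahat_smooth (w + dw) - Thetahat_smooth w - ip4 (Thetahat_smooth_grad w) dw =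
  - vdot dw.1.1.2 dw.1.1.1
  + (hp (w.1.1.1 + dw.1.1.1) - hp w.1.1.1 - vdot (dhp w.1.1.1) dw.1.1.1)
  - (hm (w.1.1.1 + dw.1.1.1) - hm w.1.1.1 - vdot (dhm w.1.1.1) dw.1.1.1)
  + delta * vnorm (dw.1.1.1 - dw.1.2) ^+ 2 + eta * vnorm (dw.1.1.2 - dw.2) ^+ 2.
Proof.
case: w dw => [[[x xi] xh] z] [[[dx dxi] dxh] dz]; rewrite /Thetahat_smooth /ip4 /=.
have splitB (a b c d : 'rV[R]_n) : a + b - (c + d) = (a - c) + (b - d).
  by rewrite opprD addrACA.
rewrite !splitB !vnormD_sqr !vdotE (vdotC dxi x) (vdotC (dhp x)) (vdotC (dhm x)).
by ring.
Qed.

Lemma Thetahat_smooth_lower_diff w :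
  has_gradient hp dhp -> has_gradient hm dhm ->
  forall e : R, 0 < e -> exists2 d : R, 0 < d & forall w',
    ipnorm (@ip4 R n) (w' - w) < d ->
    - (e * ipnorm (@ip4 R n) (w' - w)) <=
    Thetahat_smooth w' - Thetahat_smooth w - ip4 (Thetahat_smooth_grad w) (w' - w).
Proof.
move=> hp_grad hm_grad e e0.
set K := 1 + 4 * `|delta| + 4 * `|eta|.
have K0 : 0 < K by rewrite /K; have := normr_ge0 delta; have := normr_ge0 eta; lra.
have e4 : 0 < e / 4 by lra.
have [dp dp0 Hp] := hp_grad w.1.1.1 _ e4.
have [dm dm0 Hm] := hm_grad w.1.1.1 _ e4.
have eK : 0 < e / (2 * K) by rewrite divr_gt0 ?pmulr_rgt0.
exists (Num.min (Num.min dp dm) (e / (2 * K))); first by rewrite !lt_min dp0 dm0 eK.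
move=> w'; set dw := w' - w; have -> : w' = w + dw by rewrite /dw addrC subrK.
rewrite Thetahat_smooth_expansion.
have [nx nxi nxh nz] := vnorm_le_ipnorm4 dw; set N := ipnorm _ dw in nx nxi nxh nz *.
rewrite !lt_min => /andP[/andP[Np Nm] NK].
have N0 : 0 <= N := sqrtr_ge0 _.
have dxE : w.1.1.1 + dw.1.1.1 - w.1.1.1 = dw.1.1.1 by rewrite addrAC subrr add0r.
have := Hp (w.1.1.1 + dw.1.1.1); have := Hm (w.1.1.1 + dw.1.1.1); rewrite !dxE.
have dxN := vnorm_ge0 dw.1.1.1.
move=> /(_ (le_lt_trans nx Nm)) /ler_normlP[_ Rm] /(_ (le_lt_trans nx Np)) /ler_normlP[Rp _].
have cross : vdot dw.1.1.2 dw.1.1.1 <= N * N.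
  apply: le_trans (ler_norm _) (le_trans (vdot_le _ _) _).
  exact: ler_pM (vnorm_ge0 _) (vnorm_ge0 _) nxi nx.
have := scaled_vdist_sqr_ge delta nx nxh; have := scaled_vdist_sqr_ge eta nxi nz.
have KN : K * N * N <= e / 2 * N.
  by rewrite ler_wpM2r //; move: NK; rewrite ltr_pdivlMr ?pmulr_rgt0 //; lra.
have dxN' : e / 4 * vnorm dw.1.1.1 <= e / 4 * N by rewrite ler_wpM2l //; lra.
rewrite /K in KN; lra.
Qed.

End ThetahatSmooth.

Lemma Thetahat_frechet_subdiff (R : realType) n (f : 'rV[R]_n -> \bar R)
    (g hp hm : 'rV[R]_n -> R) (dhp dhm : 'rV[R]_n -> 'rV[R]_n) (delta eta : R)
    (w : quad R n) (a b : 'rV[R]_n) :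
  has_gradient hp dhp -> has_gradient hm dhm ->
  f w.1.1.1 \is a fin_num ->
  (forall y, (f w.1.1.1 + (vdot a (y - w.1.1.1))%:E <= f y)%E) ->
  conjugate g w.1.1.2 \is a fin_num ->
  (forall y, (conjugate g w.1.1.2 + (vdot b (y - w.1.1.2))%:E <= conjugate g y)%E) ->
  frechet_subdiff (@ip4 R n) (Thetahat f g hp hm delta eta) w
    ((a, b, 0, 0) + Thetahat_smooth_grad dhp dhm delta eta w).
Proof.
move=> hp_grad hm_grad f1 fsub c1 csub.
have -> : Thetahat f g hp hm delta eta = fun w =>
    (f w.1.1.1 + conjugate g w.1.1.2 + (Thetahat_smooth hp hm delta eta w)%:E)%E.
  by apply/funext => w'; exact: ThetahatE.
apply: frechet_subdiff_add_smooth.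
- exact: ip4Dl.
- by rewrite fin_numD f1 c1.
- move=> w'; rewrite /ip4 /= !vdot0l !addr0 EFinD addeACA.
  by apply: leeD; [exact: fsub | exact: csub].
- exact: Thetahat_smooth_lower_diff.
Qed.

Lemma xhat_succE (R : realType) n (x : nat -> 'rV[R]_n) (alpha : nat -> R) k :
  x k.+1 - xhat x alpha k.+1 = alpha k.+1 *: (x k - x k.+1).
Proof. by rewrite /xhat /= opprD addrA subrr add0r -scalerN opprB. Qed.

Section Iterates.
Variables (R : realType) (n : nat).
Variables (f : 'rV[R]_n -> \bar R) (g hp hm psi : 'rV[R]_n -> R).
Variables (dhp dhm dpsi : 'rV[R]_n -> 'rV[R]_n).
Variables (alpha : nat -> R) (beta tau delta eta : R) (x xi : nat -> 'rV[R]_n).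
Hypothesis alpha_gt0 : forall k, 0 < alpha k.

Let xh := xhat x alpha.

(* The first two components are the subgradients of f and g^* given by the
   two subproblems; the rest is the gradient of the smooth part. *)
Lemma upsilonE k : upsilon x xi alpha dhm dpsi beta tau delta eta k =
  (xi k.+1 + dhm (xh k) - dhp (x k.+1) - tau *: (dpsi (x k.+1) - dpsi (xh k)),
   xh k - beta *: (xi k.+1 - xi k), 0, 0)
  + Thetahat_smooth_grad dhp dhm delta eta (omegahat x xi alpha k.+1).
Proof.
rewrite /upsilon /omegahat /Thetahat_smooth_grad /xh /xhat /=.
have a0 := lt0r_neq0 (alpha_gt0 k.+1).
by congr (_, _, _, _); apply/rowP => i; rewrite !mxE; field.
Qed.

Hypotheses (f_proper : proper_fun f) (f_convex : econvex_fun f).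
Hypotheses (g_convex : convex_fun g) (g_cont : continuous_fun g).
Hypotheses (hp_grad : has_gradient hp dhp) (hm_grad : has_gradient hm dhm).
Hypotheses (psi_grad : has_gradient psi dpsi) (tau_ge0 : 0 <= tau).
Hypothesis iter : iBPDCA f g hp dhm psi dpsi alpha beta tau x xi.

Lemma upsilon_frechet_subdiff k :
  frechet_subdiff (@ip4 R n) (Thetahat f g hp hm delta eta)
    (omegahat x xi alpha k.+1) (upsilon x xi alpha dhm dpsi beta tau delta eta k).
Proof.
have [f1 fsub] := x_step_subgrad f_proper f_convex hp_grad psi_grad tau_ge0 (iter k).2.
have [c1 csub] := xi_step_subgrad g_convex g_cont (iter k).1.
by rewrite upsilonE; apply: Thetahat_frechet_subdiff.
Qed.

End Iterates.

Lemma lipschitz_with_le (R : realType) n (G : 'rV[R]_n -> 'rV[R]_n) (L : R) u v :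
  lipschitz_with G L -> vnorm (G u - G v) <= `|L| * vnorm (u - v).
Proof. by move=> GL; apply: le_trans (GL u v) (ler_wpM2r (vnorm_ge0 _) (ler_norm _)). Qed.

Lemma upsilon_ipnorm_le (R : realType) n (x xi : nat -> 'rV[R]_n) (alpha : nat -> R)
    (dhm dpsi : 'rV[R]_n -> 'rV[R]_n) (beta tau delta eta Lhm Lpsi : R) k :
  lipschitz_with dhm Lhm -> lipschitz_with dpsi Lpsi -> 0 < alpha k.+1 ->
  ipnorm (@ip4 R n) (upsilon x xi alpha dhm dpsi beta tau delta eta k) <=
  (`|Lhm| + `|tau| * `|Lpsi| + 1) * vnorm (xhat x alpha k - x k.+1)
  + 4 * `|delta| * vnorm (x k.+1 - xhat x alpha k.+1)
  + (`|2 * eta - beta| + 2 * `|eta|) * vnorm (xi k.+1 - xi k).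
Proof.
move=> hm_lip psi_lip a0; set xh := xhat x alpha.
set M := vnorm (xh k - x k.+1); set B := vnorm (x k.+1 - xh k.+1).
set C := vnorm (xi k.+1 - xi k).
have ux : vnorm (dhm (xh k) - dhm (x k.+1) + (2 * delta) *: (x k.+1 - xh k.+1)
                 - tau *: (dpsi (x k.+1) - dpsi (xh k)))
          <= `|Lhm| * M + 2 * `|delta| * B + `|tau| * (`|Lpsi| * M).
  apply: le_trans (vnormB _ _) _; apply: lerD; first apply: le_trans (vnormD _ _) _.
    by rewrite vnormZ normrM (ger0_norm (ler0n _ 2)) lerD2r lipschitz_with_le.
  by rewrite vnormZ ler_wpM2l // vdistC lipschitz_with_le.
have uxi : vnorm (xh k - x k + (alpha k.+1)^-1 *: (x k.+1 - xh k.+1)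
                  + (2 * eta - beta) *: (xi k.+1 - xi k)) <= M + `|2 * eta - beta| * C.
  rewrite /xh xhat_succE scalerA mulVf ?gt_eqF // scale1r addrA subrK.
  by apply: le_trans (vnormD _ _) _; rewrite vnormZ.
rewrite /upsilon /=; apply: le_trans (ipnorm4_le _) _ => /=.
rewrite vnormN !vnormZ !normrM !(ger0_norm (ler0n _ 2)) -/xh -/B vdistC -/C.
have -> : (`|Lhm| + `|tau| * `|Lpsi| + 1) * M + 4 * `|delta| * B
          + (`|2 * eta - beta| + 2 * `|eta|) * C
        = `|Lhm| * M + 2 * `|delta| * B + `|tau| * (`|Lpsi| * M)
          + (M + `|2 * eta - beta| * C) + 2 * `|delta| * B + 2 * `|eta| * C by ring.
by rewrite !lerD2r lerD.
Qed.

Lemma upsilon_ipnorm_bound (R : realType) n (x xi : nat -> 'rV[R]_n) (alpha : nat -> R)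
    (dhm dpsi : 'rV[R]_n -> 'rV[R]_n) (beta tau delta eta Lhm Lpsi alpha_min : R) :
  lipschitz_with dhm Lhm -> lipschitz_with dpsi Lpsi ->
  0 < alpha_min -> (forall k, alpha_min <= alpha k) ->
  exists2 theta : R, 0 < theta & forall k,
    ipnorm (@ip4 R n) (upsilon x xi alpha dhm dpsi beta tau delta eta k) <=
    theta * (vnorm (x k - xhat x alpha k) + vnorm (x k.+1 - xhat x alpha k.+1)
             + vnorm (xi k.+1 - xi k)).
Proof.
move=> hm_lip psi_lip amin0 amin_le.
set K := `|Lhm| + `|tau| * `|Lpsi| + 1; set c := `|2 * eta - beta| + 2 * `|eta|.
have K0 : 0 <= K.
  by rewrite /K; have := normr_ge0 Lhm; have := mulr_ge0 (normr_ge0 tau) (normr_ge0 Lpsi); lra.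
have c0 : 0 <= c by rewrite /c; have := normr_ge0 eta; have := normr_ge0 (2 * eta - beta); lra.
have d0 := normr_ge0 delta; have inv0 : 0 <= alpha_min^-1 by rewrite invr_ge0 ltW.
set theta := K * (1 + alpha_min^-1) + 4 * `|delta| + c + 1.
exists theta; first by have := mulr_ge0 K0 (addr_ge0 ler01 inv0); rewrite /theta; lra.
move=> k; have a0 : 0 < alpha k.+1 by apply: lt_le_trans (amin_le _).
apply: le_trans (upsilon_ipnorm_le x xi beta tau delta eta hm_lip psi_lip a0) _.
set xh := xhat x alpha; rewrite -/K -/c.
set A := vnorm (x k - xh k); set B := vnorm (x k.+1 - xh k.+1); set C := vnorm (xi k.+1 - xi k).
have A0 : 0 <= A := vnorm_ge0 _; have B0 : 0 <= B := vnorm_ge0 _.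
have C0 : 0 <= C := vnorm_ge0 _.
have step : vnorm (x k - x k.+1) <= alpha_min^-1 * B.
  rewrite /B /xh xhat_succE vnormZ gtr0_norm // mulrA -[leLHS]mul1r ler_wpM2r ?vnorm_ge0 //.
  by rewrite ler_pdivlMl // mulr1.
have KM : K * vnorm (xh k - x k.+1) <= K * A + K * alpha_min^-1 * B.
  rewrite -mulrA -mulrDr ler_wpM2l // (_ : xh k - x k.+1 = (xh k - x k) + (x k - x k.+1)).
    by apply: le_trans (vnormD _ _) _; rewrite vdistC -/A lerD2l.
  by rewrite addrA subrK.
have -> : theta * (A + B + C) = K * A + K * alpha_min^-1 * B + 4 * `|delta| * B + c * C
   + (K * alpha_min^-1 * A + K * B + K * (1 + alpha_min^-1) * C
      + 4 * `|delta| * (A + C) + c * (A + B) + (A + B + C)).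
  by rewrite /theta; ring.
rewrite -[leLHS]addr0 lerD ?lerD2r //.
by rewrite !addr_ge0 // ?mulr_ge0 // ?addr_ge0.
Qed.

Theorem lemma3p3 (R : realType) (n : nat)
  (f : 'rV[R]_n -> \bar R) (g hp hm psi : 'rV[R]_n -> R)
  (dhp dhm dpsi : 'rV[R]_n -> 'rV[R]_n)
  (Lhp Lhm rho Lpsi : R)
  (alpha : nat -> R) (alpha_min beta tau eps delta eta : R)
  (x xi : nat -> 'rV[R]_n)
  (f_proper : proper_fun f) (f_lsc : lsc_fun f) (f_convex : econvex_fun f)
  (g_convex : convex_fun g) (g_cont : continuous_fun g)
  (hp_grad : has_gradient hp dhp) (hp_lip : lipschitz_with dhp Lhp)
  (hm_grad : has_gradient hm dhm) (hm_lip : lipschitz_with dhm Lhm)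
  (Phi_bdd : exists m : R, forall z, (m%:E <= Phi f g hp hm z)%E)
  (psi_grad : has_gradient psi dpsi) (rho_pos : 0 < rho)
  (psi_sc : strongly_convex psi rho) (psi_lip : lipschitz_with dpsi Lpsi)
  (amin_bnd : 0 < alpha_min < 1)
  (alpha_bnd : forall k, alpha_min <= alpha k <= 1)
  (beta_gt : 1 / 2 < beta) (tau_pos : 0 < tau)
  (eps_bnd : 0 < eps < 1)
  (delta_def : delta = (tau * Lpsi - Lhm)
                        / (2 * ((1 - eps) + (1 + eps) * alpha_min ^+ 2)))
  (tau_def : tau = (2 * Lhm ^+ 2 + Lhm + 1 + 2 * (1 + eps) * delta) / (2 * rho))
  (eta_def : eta = (2 * beta - 1) / (2 * (1 + eps)))
  (Lhm_lt : Lhm < tau * Lpsi)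
  (iter : iBPDCA f g hp dhm psi dpsi alpha beta tau x xi)
  (bounded : exists M : R, forall k,
      [/\ vnorm (x k) <= M, vnorm (xi k) <= M & vnorm (xhat x alpha k) <= M]) :
  (forall k, limiting_subdiff (@ip4 R n) (Thetahat f g hp hm delta eta)
               (omegahat x xi alpha k.+1)
               (upsilon x xi alpha dhm dpsi beta tau delta eta k)) /\
  exists2 theta : R, 0 < theta &
    forall k,
      (dist0 (@ip4 R n)
         (limiting_subdiff (@ip4 R n) (Thetahat f g hp hm delta eta)
                           (omegahat x xi alpha k.+1))
       <= (theta * (vnorm (x k - xhat x alpha k)
                    + vnorm (x k.+1 - xhat x alpha k.+1)
                    + vnorm (xi k.+1 - xi k)))%:E)%E.
Proof.
have [amin0 _] := andP amin_bnd.
have alpha_ge k : alpha_min <= alpha k by case/andP: (alpha_bnd k).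
have alpha_gt0 k : 0 < alpha k := lt_le_trans amin0 (alpha_ge k).
have upsilon_limiting k : limiting_subdiff (@ip4 R n) (Thetahat f g hp hm delta eta)
    (omegahat x xi alpha k.+1) (upsilon x xi alpha dhm dpsi beta tau delta eta k).
  apply: frechet_subdiff_limiting; first exact: ip40.
  exact: upsilon_frechet_subdiff alpha_gt0 f_proper f_convex g_convex g_cont
    hp_grad hm_grad psi_grad (ltW tau_pos) iter k.
split => //.
have [theta theta0 bound] :=
  upsilon_ipnorm_bound x xi beta tau delta eta hm_lip psi_lip amin0 alpha_ge.
exists theta => // k.
apply: le_trans (dist0_le_ipnorm (@ip4 R n) (upsilon_limiting k)) _.
by rewrite lee_fin bound.
Qed.
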